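(* Let $G$ be a finite abelian group and $M$ a finite $\hat G$-linear inverse monoid. Then $M$ is left inductive and right inductive.
   Context: $\hat G=G\sqcup\{0\}$ with $0$ absorbing. $\mathrm{Vect}_{\hat G}$: objects are finite pointed sets with an action of $\hat G$ ($0v=0$, $g0=0$) such that $G$ acts freely on nonzero elements; morphisms $f$ satisfy $f(0)=0$, $f(gv)=gf(v)$, $f(v_1)=f(v_2)\neq0\Rightarrow Gv_1=Gv_2$. A $\hat G$-linear monoid is a finite monoid $M$ with absorbing element $0_M$ containing $G$ as a subgroup of units commuting with all of $M$, with $G$ acting freely by translation on $M\setminus\{0_M\}$. $M$ is inverse if each $x$ has a unique $x^*$ with $xx^*x=x$, $x^*xx^*=x^*$. For $a\in M$: $J(a)=MaM$, $I(a)=\{x\in J(a):MxM\neq J(a)\}$, $P(a)=(J(a)\setminus I(a))\cup\{0\}$, with left translation $m\cdot x=mx$ if $mx\in J(a)\setminus I(a)$, else $0$, and right translation analogously. $M$ is left (resp. right) inductive if for every idempotent $e$, every left (resp. right) translation on $P(e)$ is a morphism of $\mathrm{Vect}_{\hat G}$ (so $P(e)$ is a $\hat G$-linear representation of $M$, resp. $M^{\mathrm{op}}$). *)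

From mathcomp Require Import all_boot fingroup.
Set Implicit Arguments. Unset Strict Implicit. Unset Printing Implicit Defensive.

(* A finite monoid is given by a finite carrier T, a multiplication [mul],
   a unit [one] and an absorbing element [zero].  The group G is the whole
   finGroupType gT, embedded in M via [iota]. *)

Section Defs.
Variables (gT : finGroupType) (T : finType).
Variables (mul : T -> T -> T) (one zero : T) (iota : gT -> T).

Local Open Scope group_scope.

Definition Ghat_linear_monoid : Prop :=
  [/\ (forall x y z, mul x (mul y z) = mul (mul x y) z),
      (forall x, mul one x = x /\ mul x one = x),
      (forall x, mul zero x = zero /\ mul x zero = zero),
      (injective iota /\ iota 1 = one /\ forall g h, iota (g * h) = mul (iota g) (iota h))
    & ((forall g m, mul (iota g) m = mul m (iota g)) /\
       (forall g m, m != zero -> mul (iota g) m = m -> g = 1))].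

Definition inverse_monoid : Prop :=
  forall x, exists! y, mul (mul x y) x = x /\ mul (mul y x) y = y.

Definition idempotent_el (e : T) : Prop := mul e e = e.

Definition Jset (a : T) : {set T} := [set mul (mul m a) n | m in T, n in T].
Definition Iset (a : T) : {set T} := [set x in Jset a | Jset x != Jset a].
Definition JIset (a : T) : {set T} := Jset a :\: Iset a.
Definition Pset (a : T) : {set T} := zero |: JIset a.

Definition ltrans (a m x : T) : T :=
  if mul m x \in JIset a then mul m x else zero.
Definition rtrans (a m x : T) : T :=
  if mul x m \in JIset a then mul x m else zero.

(* Objects and morphisms of Vect_{\hat G}, for a subset S of T with
   base point zero and G-action act (the element 0 of \hat G acts by zero). *)
Definition vect_object (S : {set T}) (act : gT -> T -> T) : Prop :=
  [/\ zero \in S,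
      (forall g x, x \in S -> act g x \in S),
      (forall g, act g zero = zero),
      (forall x, x \in S -> act 1 x = x) /\
      (forall g h x, x \in S -> act (g * h) x = act g (act h x))
    & (forall g x, x \in S -> x != zero -> act g x = x -> g = 1)].

Definition Gorbit (act : gT -> T -> T) (v : T) : {set T} :=
  [set act g v | g : gT].

Definition vect_morphism (S : {set T}) (act : gT -> T -> T) (f : T -> T) : Prop :=
  [/\ (forall x, x \in S -> f x \in S),
      f zero = zero,
      (forall g x, x \in S -> f (act g x) = act g (f x))
    & (forall v1 v2, v1 \in S -> v2 \in S -> f v1 = f v2 -> f v1 != zero ->
         Gorbit act v1 = Gorbit act v2)].

Definition left_inductive : Prop :=
  forall e, idempotent_el e ->
    let act := fun g => ltrans e (iota g) in
    vect_object (Pset e) act /\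
    forall m, vect_morphism (Pset e) act (ltrans e m).

Definition right_inductive : Prop :=
  forall e, idempotent_el e ->
    let act := fun g => rtrans e (iota g) in
    vect_object (Pset e) act /\
    forall m, vect_morphism (Pset e) act (rtrans e m).

End Defs.

From mathcomp Require Import all_boot fingroup.
Set Implicit Arguments. Unset Strict Implicit. Unset Printing Implicit Defensive.

(* G acts on P(e) by the translations by the central units iota g, which
   preserve J-classes, so P(e) is an object of Vect_{\hat G}.  The only real
   content is injectivity: if m v1 = m v2 lies in the J-class of v1 and v2,
   then v1 = v2.  Finiteness (stability) turns v J m v into v L m v, i.e.
   v = z (m v), and in an inverse monoid this forces v = m^* (m v), because
   idempotents commute.  Right inductivity is left inductivity of the
   opposite monoid. *)

Section InverseMonoid.
Variables (T : finType) (mul : T -> T -> T).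
Local Notation "x ** y" := (mul x y) (at level 40, left associativity).
Hypothesis mulA : forall x y z, x ** (y ** z) = x ** y ** z.
Hypothesis inverseM : inverse_monoid mul.

Definition is_inverse x y := x ** y ** x = x /\ y ** x ** y = y.

Definition inv x := odflt x [pick y | (x ** y ** x == x) && (y ** x ** y == y)].

Lemma inverse_unique x y z : is_inverse x y -> is_inverse x z -> y = z.
Proof.
by move=> Hy Hz; have [w [_ Hw]] := inverseM x; rewrite -(Hw _ Hy) -(Hw _ Hz).
Qed.

Lemma invP x : is_inverse x (inv x).
Proof.
rewrite /inv; case: pickP => [y /andP[/eqP ? /eqP ?] //| Hnone].
have [w [[Hw1 Hw2] _]] := inverseM x.
by move: (Hnone w); rewrite Hw1 Hw2 !eqxx.
Qed.

Lemma mul_inv_mul x : x ** (inv x ** x) = x.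
Proof. by rewrite mulA; case: (invP x). Qed.

Lemma inv_mul_inv x : inv x ** (x ** inv x) = inv x.
Proof. by rewrite mulA; case: (invP x). Qed.

Lemma mul_inv_mulA x z : x ** (inv x ** (x ** z)) = x ** z.
Proof. by rewrite (mulA (inv x)) (mulA x) mul_inv_mul. Qed.

Lemma inv_mul_invA x z : inv x ** (x ** (inv x ** z)) = inv x ** z.
Proof. by rewrite (mulA x) (mulA (inv x)) inv_mul_inv. Qed.

Let idemA u z : idempotent_el mul u -> u ** (u ** z) = u ** z.
Proof. by move=> idem_u; rewrite mulA idem_u. Qed.

Lemma idempotent_mul e f :
  idempotent_el mul e -> idempotent_el mul f -> idempotent_el mul (e ** f).
Proof.
move=> idem_e idem_f.
have [Hb1 Hb2] := invP (e ** f); set b := inv (e ** f) in Hb1 Hb2 *.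
have inverse_fbe : is_inverse (e ** f) (f ** b ** e).
  split; first by rewrite -[RHS]Hb1 -!mulA !idemA.
  by rewrite -[in RHS]Hb2 -!mulA !idemA.
have Eb : f ** b ** e = b := inverse_unique inverse_fbe (invP _).
have idem_b : b ** b = b by rewrite -{1 2}Eb -[RHS]Eb -[in RHS]Hb2 -!mulA.
have inverse_b_ef : is_inverse b (e ** f) by split.
have inverse_b_b : is_inverse b b by rewrite /is_inverse !idem_b.
by rewrite /idempotent_el (inverse_unique inverse_b_ef inverse_b_b).
Qed.

Lemma idempotent_comm e f :
  idempotent_el mul e -> idempotent_el mul f -> e ** f = f ** e.
Proof.
move=> idem_e idem_f.
have idem_ef := idempotent_mul idem_e idem_f.
have idem_fe := idempotent_mul idem_f idem_e.
have inverse_ef_ef : is_inverse (e ** f) (e ** f) by rewrite /is_inverse !idem_ef.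
apply: inverse_unique inverse_ef_ef _.
by split; [rewrite -[RHS]idem_ef | rewrite -[RHS]idem_fe]; rewrite -!mulA !idemA.
Qed.

Lemma idempotent_mul_inv x : idempotent_el mul (x ** inv x).
Proof. by rewrite /idempotent_el -!mulA mul_inv_mulA. Qed.

Lemma idempotent_inv_mul x : idempotent_el mul (inv x ** x).
Proof. by rewrite /idempotent_el -!mulA inv_mul_invA. Qed.

Lemma mul_inv_comm x y z :
  x ** (inv x ** (inv y ** (y ** z))) = inv y ** (y ** (x ** (inv x ** z))).
Proof.
have Exy := idempotent_comm (idempotent_mul_inv x) (idempotent_inv_mul y).
transitivity (x ** inv x ** (inv y ** y) ** z); first by rewrite -!mulA.
by rewrite Exy -!mulA.
Qed.

Lemma inv_mul x y : inv (x ** y) = inv y ** inv x.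
Proof.
apply: inverse_unique (invP _) _; split.
  by rewrite -!mulA mul_inv_comm mul_inv_mulA mul_inv_mul.
by rewrite -!mulA -mul_inv_comm inv_mul_invA inv_mul_inv.
Qed.

(* [x = x (u^* u)] for [u = m x], then [(m x)^* = x^* m^*] and the commutation
   of the idempotents [x x^*] and [m^* m]. *)
Lemma inv_mulL_cancel m x z : x = z ** (m ** x) -> x = inv m ** (m ** x).
Proof.
move=> Hz.
have Ex : x = x ** (inv (m ** x) ** (m ** x)).
  transitivity (z ** (m ** x) ** (inv (m ** x) ** (m ** x))).
    by rewrite -mulA mul_inv_mul -Hz.
  by rewrite -Hz.
by rewrite {1}Ex inv_mul -!mulA mul_inv_comm mul_inv_mul.
Qed.

End InverseMonoid.

Section FiniteMonoid.
Variables (T : finType) (mul : T -> T -> T) (one : T).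
Local Notation "x ** y" := (mul x y) (at level 40, left associativity).
Hypothesis mulA : forall x y z, x ** (y ** z) = x ** y ** z.
Hypothesis mul1x : forall x, one ** x = x.
Hypothesis mulx1 : forall x, x ** one = x.

Definition mpow c k := iter k (mul c) one.

Lemma mpowD c i j : mpow c (i + j) = mpow c i ** mpow c j.
Proof.
by elim: i => [|i IHi]; rewrite ?mul1x // addSn /mpow /= -/(mpow c _) IHi mulA.
Qed.

Lemma mpow_collision c : exists i k, mpow c (k.+1 + i) = mpow c i.
Proof.
pose f (i : 'I_#|T|.+1) := mpow c i.
have /injectivePn[i [j neq_ij Efij]] : ~~ injectiveb f.
  by apply/injectiveP => /leq_card; rewrite card_ord ltnn.
have [lt_ij|lt_ji|/val_inj Eij] := ltngtP i j; last by rewrite Eij eqxx in neq_ij.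
  by exists i, (j - i).-1; rewrite prednK ?subn_gt0 // subnK 1?ltnW.
by exists j, (i - j).-1; rewrite prednK ?subn_gt0 // subnK 1?ltnW.
Qed.

(* Iterating [x = (a m) x b] gives [x = (a m)^i x w] for every [i], and a
   collision [(a m)^(k+1+i) = (a m)^i] of powers yields [x = (a m)^(k+1) x]. *)
Lemma stable_mulL a b m x : x = a ** (m ** x) ** b -> exists z, x = z ** (m ** x).
Proof.
move=> Hx; set c := a ** m.
have iterate k : exists w, x = mpow c k ** x ** w.
  elim: k => [|k [w IHk]]; first by exists one; rewrite mul1x mulx1.
  exists (w ** b); rewrite /mpow /= -/(mpow c k).
  by rewrite {1}Hx {1}IHk /c !mulA.
have [i [k Eck]] := mpow_collision c.
have [w Ew] := iterate i.
exists (mpow c k ** a).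
have Ec : mpow c k.+1 = mpow c k ** c by rewrite -addn1 mpowD [mpow c 1]/mpow /= mulx1.
rewrite -(mulA _ a) (mulA a) -/c mulA -Ec.
by rewrite {2}Ew !mulA -mpowD Eck -Ew.
Qed.

End FiniteMonoid.

Section Jclasses.
Variables (T : finType) (mul : T -> T -> T) (one : T).
Local Notation "x ** y" := (mul x y) (at level 40, left associativity).
Hypothesis mulA : forall x y z, x ** (y ** z) = x ** y ** z.
Hypothesis mul1x : forall x, one ** x = x.
Hypothesis mulx1 : forall x, x ** one = x.

Lemma JsetP a x : reflect (exists p q, x = p ** a ** q) (x \in Jset mul a).
Proof.
apply: (iffP imset2P) => [[p q _ _ ->]|[p [q ->]]]; first by exists p, q.
by exists p q.
Qed.

Lemma mem_Jset_self x : x \in Jset mul x.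
Proof. by apply/JsetP; exists one, one; rewrite mul1x mulx1. Qed.

Lemma Jset_mulL a x e : x \in Jset mul e -> a ** x \in Jset mul e.
Proof. by case/JsetP=> p [q ->]; apply/JsetP; exists (a ** p), q; rewrite !mulA. Qed.

Lemma Jset_subset x y : x \in Jset mul y -> Jset mul x \subset Jset mul y.
Proof.
case/JsetP=> p [q ->]; apply/subsetP=> z /JsetP[r [s ->]].
by apply/JsetP; exists (r ** p), (q ** s); rewrite !mulA.
Qed.

Lemma JIsetE a x :
  (x \in JIset mul a) = (x \in Jset mul a) && (Jset mul x == Jset mul a).
Proof. by rewrite !inE; case: (x \in Jset mul a); rewrite ?negbK ?andbT. Qed.

Lemma JIset_mulL_cancel m x e : inverse_monoid mul ->
  x \in JIset mul e -> m ** x \in JIset mul e -> x = inv mul m ** (m ** x).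
Proof.
move=> inverseM; rewrite !JIsetE => /andP[_ /eqP Jx] /andP[_ /eqP Jmx].
have /JsetP[p [q Ex]] : x \in Jset mul (m ** x) by rewrite Jmx -Jx mem_Jset_self.
have [z Ez] := stable_mulL mulA mul1x mulx1 Ex.
exact: (inv_mulL_cancel mulA inverseM Ez).
Qed.

End Jclasses.

Section LeftInductive.
Variables (gT : finGroupType) (T : finType) (mul : T -> T -> T) (one zero : T).
Variables (iota : gT -> T).
Local Notation "x ** y" := (mul x y) (at level 40, left associativity).
Hypothesis linM : Ghat_linear_monoid mul one zero iota.

Let mulA x y z : x ** (y ** z) = x ** y ** z. Proof. by case: linM. Qed.
Let mul1x x : one ** x = x. Proof. by case: linM => _ /(_ x)[]. Qed.
Let mulx1 x : x ** one = x. Proof. by case: linM => _ /(_ x)[]. Qed.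
Let mulx0 x : x ** zero = zero. Proof. by case: linM => _ _ /(_ x)[]. Qed.
Let iota1 : iota 1%g = one. Proof. by case: linM => _ _ _ [_ []]. Qed.
Let iotaM g h : iota (g * h)%g = iota g ** iota h. Proof. by case: linM => _ _ _ [_ []]. Qed.
Let iota_central g m : iota g ** m = m ** iota g. Proof. by case: linM => _ _ _ _ []. Qed.
Let iota_free g m : m != zero -> iota g ** m = m -> g = 1%g.
Proof. by case: linM => _ _ _ _ [_]; apply. Qed.

Let iotaVK g x : iota g^-1 ** (iota g ** x) = x.
Proof. by rewrite mulA -iotaM mulVg iota1 mul1x. Qed.

Lemma Jset_iota g x : Jset mul (iota g ** x) = Jset mul x.
Proof.
have Jself := mem_Jset_self mul1x mulx1.
apply/eqP; rewrite eqEsubset; apply/andP; split; apply: (Jset_subset mulA).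
  exact/(Jset_mulL mulA)/Jself.
by rewrite -{1}(iotaVK g x); apply/(Jset_mulL mulA)/Jself.
Qed.

Lemma JIset_iota e g x : (iota g ** x \in JIset mul e) = (x \in JIset mul e).
Proof.
rewrite !JIsetE Jset_iota; congr (_ && _).
apply/idP/idP => [|/(Jset_mulL mulA)//].
by rewrite -{2}(iotaVK g x) => /(Jset_mulL mulA)->.
Qed.

Lemma PsetP e x : reflect (x = zero \/ x \in JIset mul e) (x \in Pset mul zero e).
Proof. by rewrite in_setU1; apply: (iffP orP) => -[/eqP|]; auto. Qed.

Lemma mem_Pset_zero e : zero \in Pset mul zero e.
Proof. by apply/PsetP; left. Qed.

Lemma ltrans_Pset e m x : ltrans mul zero e m x \in Pset mul zero e.
Proof. by apply/PsetP; rewrite /ltrans; case: ifP; auto. Qed.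

Lemma ltrans_zero e m : ltrans mul zero e m zero = zero.
Proof. by rewrite /ltrans mulx0; case: ifP. Qed.

Lemma ltrans_iota e g x :
  x \in JIset mul e -> ltrans mul zero e (iota g) x = iota g ** x.
Proof. by rewrite /ltrans JIset_iota => ->. Qed.

Section Idempotent.
Variable e : T.
Local Notation P := (Pset mul zero e).
Local Notation act := (fun g => ltrans mul zero e (iota g)).

Lemma Pset_vect_object : vect_object zero P act.
Proof.
split=> [|g x _|g||].
- exact: mem_Pset_zero.
- exact: ltrans_Pset.
- exact: ltrans_zero.
- split=> [x|g h x] /PsetP[->|Px]; rewrite ?ltrans_zero //.
    by rewrite ltrans_iota // iota1 mul1x.
  by rewrite !ltrans_iota ?JIset_iota // iotaM mulA.
- move=> g x /PsetP[->|Px]; first by rewrite eqxx.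
  by rewrite ltrans_iota //; apply: iota_free.
Qed.

Lemma ltrans_iotaC m g x : x \in P ->
  ltrans mul zero e m (act g x) = act g (ltrans mul zero e m x).
Proof.
case/PsetP=> [->|Px]; first by rewrite !ltrans_zero.
rewrite ltrans_iota // [ltrans _ _ _ m x]/ltrans.
have Emgx : m ** (iota g ** x) = iota g ** (m ** x).
  by rewrite mulA -iota_central -mulA.
case: ifP => Pmx; last by rewrite ltrans_zero /ltrans Emgx JIset_iota Pmx.
by rewrite ltrans_iota // /ltrans Emgx JIset_iota Pmx.
Qed.

Lemma ltrans_inj_Pset m v1 v2 : inverse_monoid mul -> v1 \in P -> v2 \in P ->
  ltrans mul zero e m v1 = ltrans mul zero e m v2 ->
  ltrans mul zero e m v1 != zero -> v1 = v2.
Proof.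
move=> inverseM; case/PsetP=> [->|Pv1]; first by rewrite ltrans_zero eqxx.
case/PsetP=> [->|Pv2]; first by rewrite ltrans_zero => ->; rewrite eqxx.
rewrite /ltrans; case: ifP => [Pmv1|_]; last by rewrite eqxx.
case: ifP => [Pmv2 Emv _|_ <-]; last by rewrite eqxx.
rewrite (JIset_mulL_cancel mulA mul1x mulx1 inverseM Pv1 Pmv1).
by rewrite (JIset_mulL_cancel mulA mul1x mulx1 inverseM Pv2 Pmv2) Emv.
Qed.

End Idempotent.

Lemma left_inductive_of_inverse : inverse_monoid mul -> left_inductive mul zero iota.
Proof.
move=> inverseM e _; split=> [|m]; first exact: Pset_vect_object.
split=> [x _||g x|v1 v2 Pv1 Pv2 Ev Pv]; rewrite ?ltrans_zero ?ltrans_Pset //.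
  exact: ltrans_iotaC.
by rewrite (ltrans_inj_Pset inverseM Pv1 Pv2 Ev Pv).
Qed.

End LeftInductive.

Section Opposite.
Variables (T : finType) (mul : T -> T -> T) (one zero : T).
Local Notation mulop := (fun x y => mul y x).

Lemma Ghat_linear_monoid_op (gT : finGroupType) (iota : gT -> T) :
  Ghat_linear_monoid mul one zero iota -> Ghat_linear_monoid mulop one zero iota.
Proof.
case=> mulA mul1 mul0 [iota_inj [iota1 iotaM]] [iota_central iota_free]; split.
- by move=> x y z; rewrite mulA.
- by move=> x; have [] := mul1 x.
- by move=> x; have [] := mul0 x.
- by split=> //; split=> // g h; rewrite iotaM iota_central.
- split=> [g m|g m m0]; first by rewrite iota_central.
  by rewrite -iota_central; apply: iota_free.
Qed.

Hypothesis mulA : forall x y z, mul x (mul y z) = mul (mul x y) z.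

Lemma inverse_monoid_op : inverse_monoid mul -> inverse_monoid mulop.
Proof.
move=> inverseM x; have [y [Hy y_uniq]] := inverseM x.
by exists y; split=> [|z]; rewrite /= !mulA // => /y_uniq.
Qed.

Lemma Jset_op a : Jset mulop a = Jset mul a.
Proof.
by apply/setP => x; apply/imset2P/imset2P => -[p q _ _ ->]; exists q p; rewrite ?mulA.
Qed.

Lemma JIset_op a : JIset mulop a = JIset mul a.
Proof. by apply/setP => x; rewrite !inE !Jset_op. Qed.

End Opposite.

Lemma right_inductive_of_inverse (gT : finGroupType) (T : finType)
    (mul : T -> T -> T) (one zero : T) (iota : gT -> T) :
  Ghat_linear_monoid mul one zero iota -> inverse_monoid mul ->
  right_inductive mul zero iota.
Proof.
move=> linM inverseM e idem_e.
have mulA : forall x y z, mul x (mul y z) = mul (mul x y) z by case: linM.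
have := left_inductive_of_inverse (Ghat_linear_monoid_op linM)
  (inverse_monoid_op mulA inverseM) idem_e.
by rewrite /ltrans /rtrans /Pset JIset_op.
Qed.

Theorem mainTheorem11 (gT : finGroupType) (T : finType)
  (mul : T -> T -> T) (one zero : T) (iota : gT -> T) :
  abelian [set: gT] ->
  Ghat_linear_monoid mul one zero iota ->
  inverse_monoid mul ->
  left_inductive mul zero iota /\ right_inductive mul zero iota.
Proof.
move=> _ linM inverseM.
split; [exact: left_inductive_of_inverse linM inverseM |].
exact: right_inductive_of_inverse linM inverseM.
Qed.
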